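(* Let $\alpha$ be irrational with continued fraction denominators $(q_n)_{n\ge1}$, fix $\delta_1>0$ and $0<c<(1/24)^2(1-e^{-\delta_1})$, and let $\delta\ge\delta'\ge\delta_1$. Let $A$ be either an interval of positive length in $\mathbb R/\mathbb Z$, or an annulus $A=B(\ell\alpha,e^{-\ell\delta'})\setminus B(\ell\alpha,ce^{-\ell\delta'})$ with $q_l/2\le\ell<q_l$ for some $l\ge1$. Suppose that for all sufficiently large $m$ a set of integers $\widetilde{\mathcal D}_m[A]\subset\{n:q_m/2\le n<q_m,\ n\alpha\in A\}$ is given with $\frac18|A|q_m\le\#\widetilde{\mathcal D}_m[A]\le|A|q_m$ (e.g. the sets provided by Propositions 3.4 and 3.5). Let $0<a<\min\{2^{-10},2^{-10}\delta\}$ and let $j\ge1$ be an integer with $\frac12\le j\cdot 2^9a\delta^{-1}\le1$. Then for all sufficiently large $k$ there exist subsets $\mathcal D_{k+2i}[A]\subset\widetilde{\mathcal D}_{k+2i}[A]$, $0\le i<j$, such that (i) the closed balls $B\big(n\alpha,\frac{a}{\delta n}\big)$, $n\in\bigcup_{0\le i<j}\mathcal D_{k+2i}[A]$, are pairwise disjoint; (ii) for each $0\le i<j$, $\#\mathcal D_{k+2i}[A]\ge\frac12\#\widetilde{\mathcal D}_{k+2i}[A]\ge\frac1{16}|A|\,q_{k+2i}$.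
   Context: Points are on the circle $\mathbb R/\mathbb Z$; $B(y,r)$ is the closed ball for $\|\cdot\|_{\mathbb R/\mathbb Z}$; $|\cdot|$ is Lebesgue measure; $q_n$ is the denominator of the $n$-th continued fraction convergent of $\alpha$. *)

From HB Require Import structures.
From mathcomp Require Import all_boot all_order all_algebra.
From mathcomp Require Import all_classical all_reals all_analysis.
Set Implicit Arguments. Unset Strict Implicit. Unset Printing Implicit Defensive.
Import Order.TTheory GRing.Theory Num.Theory.
Local Open Scope classical_set_scope.
Local Open Scope ring_scope.

Section Defs.
Variable R : realType.

Definition frac (x : R) : R := x - (Num.floor x)%:~R.

Fixpoint gauss_it (alpha : R) (n : nat) : R :=
  match n with
  | 0 => frac alpha
  | n'.+1 => frac (1 / gauss_it alpha n')
  end.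

(* partial quotients a_n (n >= 1): alpha = [a_0; a_1, a_2, ...] *)
Definition pquot (alpha : R) (n : nat) : nat :=
  Num.truncn (1 / gauss_it alpha n.-1).

(* (q_n, q_{n-1}) with q_{-1} = 0, q_0 = 1, q_n = a_n q_{n-1} + q_{n-2} *)
Fixpoint cf_qpair (alpha : R) (n : nat) : nat * nat :=
  match n with
  | 0 => (1%N, 0%N)
  | n'.+1 => let p := cf_qpair alpha n' in
             (pquot alpha n * p.1 + p.2, p.1)%N
  end.

Definition cf_q (alpha : R) (n : nat) : nat := (cf_qpair alpha n).1.

Definition circ_norm (x : R) : R := Order.min (frac x) (1 - frac x).

(* Subsets of R/Z are represented by their Z-periodic lifts to R. *)
Definition cball (y r : R) : set R := [set x | circ_norm (x - y) <= r].

Definition circ_of_itv (I : interval R) : set R :=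
  [set x | exists z : int, x + z%:~R \in I].

Definition circ_meas (A : set R) : R :=
  fine (lebesgue_measure (A `&` `[0%R, 1%R[)).

End Defs.

From Pilot Require Import Defs.
From HB Require Import structures.
From mathcomp Require Import all_boot all_order all_algebra.
From mathcomp Require Import all_classical all_reals all_analysis.
From mathcomp Require Import zify ring lra.
Import Order.TTheory GRing.Theory Num.Theory.
Local Open Scope classical_set_scope.
Local Open Scope ring_scope.
Set Implicit Arguments. Unset Strict Implicit. Unset Printing Implicit Defensive.

(* For irrational alpha the points n alpha, 0 <= n < q_m, are 1/(2 q_m)-separated on
   the circle: for 0 < |k| < q_m the best-approximation property of the convergents gives
   ||k alpha|| >= |q_(m-1) alpha - p_(m-1)| >= 1/(2 q_m).  A disk of radius a/(delta n)
   with q_m/2 <= n < q_m has radius at most 2(a/delta)/q_m, so the disks around one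
   stage are disjoint, and a disk of stage m0 meets at most 24 (a/delta) q_m/q_m0 disks of
   a stage m with q_m >= 2 q_m0.  Keeping in stage k+2i only the points whose disks miss
   every disk of the earlier stages therefore removes, by #D~_m <= |A| q_m, at most
   i 24 (a/delta) |A| q_(k+2i) <= (3/8) #D~_(k+2i) points. *)

Section CircleNorm.
Variable R : realType.
Implicit Types x y : R.
Local Notation cn := (@circ_norm R).

Lemma frac_itv x : 0 <= Defs.frac x < 1.
Proof.
have /andP[lo hi] := floor_itv x; rewrite /Defs.frac subr_ge0 lo /=.
by rewrite ltrBlDl addrC -(intrD _ 1) addrC.
Qed.

Lemma truncn_add_frac x : 0 <= x -> x = (Num.truncn x)%:R + Defs.frac x.
Proof.
move=> x0; rewrite /Defs.frac truncn_floor x0.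
have f0 : 0 <= Num.floor x by rewrite floor_ge_int.
by rewrite natr_absz ger0_norm // addrC subrK.
Qed.

Definition nearest_int x : int :=
  if Defs.frac x < 1 - Defs.frac x then Num.floor x else Num.floor x + 1.

Lemma circ_normE x : cn x = `|x - (nearest_int x)%:~R|.
Proof.
rewrite /circ_norm /nearest_int /Order.min /=.
have /andP[f0 f1] := frac_itv x; case: ifP => _; first by rewrite ger0_norm.
rewrite intrD ler0_norm; move: f1; rewrite /Defs.frac; lra.
Qed.

Lemma circ_norm_le x (p : int) : cn x <= `|x - p%:~R|.
Proof.
rewrite /circ_norm ge_min; have /andP[f0 f1] := frac_itv x.
have [pf|fp] := lerP p (Num.floor x).
  have hp : p%:~R <= (Num.floor x)%:~R :> R by rewrite ler_int.
  by apply/orP; left; rewrite ger0_norm; move: f0 f1 hp; rewrite /Defs.frac; lra.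
have hp : (Num.floor x + 1)%:~R <= p%:~R :> R by rewrite ler_int lezD1.
apply/orP; right; rewrite intrD in hp.
by rewrite ler0_norm; move: f0 f1 hp; rewrite /Defs.frac; lra.
Qed.

Lemma circ_normN x : cn (- x) = cn x.
Proof.
suff le x' : cn (- x') <= cn x' by apply/le_anti; rewrite le -{1}[x]opprK le.
rewrite [X in _ <= X]circ_normE; apply: le_trans (circ_norm_le _ (- nearest_int x')) _.
by rewrite intrN -opprD normrN.
Qed.

Lemma circ_normD x y : cn (x + y) <= cn x + cn y.
Proof.
rewrite (circ_normE x) (circ_normE y).
apply: le_trans (circ_norm_le _ (nearest_int x + nearest_int y)) _.
by rewrite intrD opprD addrACA; apply: ler_normD.
Qed.

Lemma circ_norm_cballI (y1 y2 r1 r2 : R) :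
  cball y1 r1 `&` cball y2 r2 !=set0 -> cn (y2 - y1) <= r1 + r2.
Proof.
case=> z [h1 h2]; have -> : y2 - y1 = (z - y1) - (z - y2) by ring.
by apply: le_trans (circ_normD _ _) _; rewrite circ_normN lerD.
Qed.

End CircleNorm.

Lemma count_has_le_sum (T U : Type) (P : U -> pred T) (l : seq U) (s : seq T) :
  (count (fun x => has (P^~ x) l) s <= \sum_(y <- l) count (P y) s)%N.
Proof.
elim: l => [|y l IHl]; first by rewrite big_nil count_pred0.
rewrite big_cons; apply: leq_trans (leq_add (leqnn _) IHl).
by rewrite -count_predUI; exact: leq_addr.
Qed.

Section Separated.
Variable R : realType.

Lemma floor_eq_dist_lt1 (u v : R) : Num.floor u = Num.floor v -> `|u - v| < 1.
Proof.
move=> fuv; have /andP[u1 u2] := floor_itv u; have /andP[v1 v2] := floor_itv v.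
rewrite fuv intrD in u1 u2; rewrite intrD in v2.
by rewrite ltr_norml; apply/andP; split; lra.
Qed.

Lemma separated_size_le (T : eqType) (s : seq T) (t : T -> R) (L e : R) :
  0 < e -> 0 <= L -> uniq s -> {in s, forall x, `|t x| <= L} ->
  {in s &, forall x y, x != y -> e <= `|t x - t y|} ->
  (size s)%:R <= 2 * L / e + 1.
Proof.
move=> e0 L0 us tL sep.
have tLe x : x \in s -> 0 <= (t x + L) / e <= 2 * L / e.
  move=> /tL; rewrite ler_norml => /andP[lo hi].
  by rewrite divr_ge0 ?ler_pM2r ?invr_gt0 ?(ltW e0) //=; lra.
(* distinct points of s lie in distinct cells of length e *)
pose f x := `|Num.floor ((t x + L) / e)|%N.
have f_ge0 x : x \in s -> 0 <= Num.floor ((t x + L) / e).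
  by move=> /tLe /andP[+ _]; rewrite floor_ge_int.
have f_inj : {in s &, injective f}.
  move=> x y xs ys /(congr1 Posz); rewrite !gez0_abs ?f_ge0 // => /floor_eq_dist_lt1.
  apply: contraTeq => /(sep _ _ xs ys) hxy; rewrite -leNgt.
  by rewrite -mulrBl opprD addrACA subrr addr0 normrM normfV (gtr0_norm e0) ler_pdivlMr // mul1r.
pose N := `|Num.floor (2 * L / e)|%N.
have f_le x : x \in s -> (f x < N.+1)%N.
  move=> xs; have /andP[_ hi] := tLe x xs; have := le_floor hi.
  have := f_ge0 x xs; rewrite /f /N; lia.
have : (size s <= N.+1)%N.
  rewrite -(size_map f) -(size_iota 0 N.+1); apply: uniq_leq_size.
    by rewrite map_inj_in_uniq.
  by move=> _ /mapP[x xs ->]; rewrite mem_iota add0n f_le.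
rewrite -(ler_nat R) => /le_trans; apply; rewrite -addn1 natrD lerD2r /N.
by rewrite natr_absz ger0_norm ?floor_le // floor_ge_int divr_ge0 ?mulr_ge0 ?(ltW e0).
Qed.

End Separated.

Lemma int_comb_signs (u v k Q Q' : int) :
  u * Q + v * Q' = k -> 0 < k < Q -> 0 <= Q' ->
  (0 < v /\ u <= 0) \/ (v < 0 /\ 0 <= u).
Proof.
move=> def_k /andP[k0 kQ] Q'0.
have [u1|u0] := lerP 1 u.
  have : u * Q >= Q by nia.
  have [v0|v0] := lerP 0 v; last by right; split; lia.
  have : v * Q' >= 0 by nia.
  lia.
have [v1|v0] := lerP 1 v; first by left; lia.
have : u * Q <= 0 by nia.
have : v * Q' <= 0 by nia.
lia.
Qed.

Section ContinuedFraction.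
Variable R : realType.
Variable alpha : R.
Hypothesis alpha_irr : irrational alpha.

Local Notation x n := (gauss_it alpha n).
Local Notation a n := (pquot alpha n).
Local Notation q n := (cf_q alpha n).
Local Notation q' n := (cf_qpair alpha n).2.

(* (p_n, p_(n-1)), with p_(-1) = 1 and p_0 = floor alpha *)
Fixpoint cf_ppair (n : nat) : int * int :=
  match n with
  | 0 => (Num.floor alpha, 1)
  | n'.+1 => let p := cf_ppair n' in ((a n)%:Z * p.1 + p.2, p.1)
  end.

Local Notation p n := (cf_ppair n).1.
Local Notation p' n := (cf_ppair n).2.

Definition cf_err n : R := (q n)%:R * alpha - (p n)%:~R.
Definition cf_err_prev n : R := (q' n)%:R * alpha - (p' n)%:~R.

Lemma cf_det n : (q n)%:Z * p' n - p n * (q' n)%:Z = (-1) ^+ n.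
Proof.
elim: n => [|n IHn]; first by rewrite /cf_q /= mulr1 mulr0 subr0.
rewrite exprS -IHn /cf_q /= PoszD PoszM; ring.
Qed.

Lemma cf_err_neq0 n : cf_err n != 0.
Proof.
rewrite /cf_err subr_eq0; apply/eqP => qp.
have [q0|q_gt0] := posnP (q n).
  have p0 : p n = 0 by apply/eqP; rewrite -(eqr_int R) -qp q0 mul0r.
  by have := cf_det n; rewrite q0 p0 !mul0r subrr => /eqP; rewrite eq_sym signr_eq0.
apply: alpha_irr; apply/rationalP; exists (p n), (q n).
by rewrite -qp mulrAC divff ?mul1r // pnatr_eq0 -lt0n.
Qed.

Lemma cf_errS n : cf_err n.+1 = (a n.+1)%:R * cf_err n + cf_err_prev n.
Proof. by rewrite /cf_err /cf_err_prev /cf_q /= natrD natrM intrD intrM; ring. Qed.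

Lemma cf_err_prevS n : cf_err_prev n.+1 = cf_err n.
Proof. by []. Qed.

Lemma gauss_it_itv n : 0 <= x n < 1.
Proof. by case: n => [|n]; apply: frac_itv. Qed.

Lemma gauss_it_gt0_from n : cf_err n = - x n * cf_err_prev n -> 0 < x n.
Proof.
move=> e_x; have /andP[x0 _] := gauss_it_itv n; rewrite lt_neqAle x0 andbT eq_sym.
by apply: contra (cf_err_neq0 n); rewrite e_x => /eqP->; rewrite oppr0 mul0r.
Qed.

Lemma cf_err_gauss n : cf_err n = - x n * cf_err_prev n.
Proof.
elim: n => [|n IHn].
  by rewrite /cf_err /cf_err_prev /cf_q /= mul1r mul0r sub0r mulrN mulr1 opprK.
have x_gt0 := gauss_it_gt0_from IHn.
rewrite cf_errS cf_err_prevS IHn.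
have -> : (a n.+1)%:R = 1 / x n - x n.+1.
  by rewrite [1 / x n]truncn_add_frac ?addrK // divr_ge0 // ltW.
by field; rewrite gt_eqF.
Qed.

Lemma gauss_it_gt0 n : 0 < x n.
Proof. exact/gauss_it_gt0_from/cf_err_gauss. Qed.

Lemma pquot_gt0 n : (0 < a n.+1)%N.
Proof.
have x0 := gauss_it_gt0 n; have /andP[_ x1] := gauss_it_itv n.
by rewrite /pquot truncn_gt0 ler_pdivlMr // mul1r ltW.
Qed.

Lemma cf_qS n : q n.+1 = (a n.+1 * q n + q' n)%N.
Proof. by []. Qed.

Lemma cf_q_prevS n : q' n.+1 = q n.
Proof. by []. Qed.

Lemma cf_q_prev_le n : (q' n <= q n)%N.
Proof. by case: n => [|n] //; rewrite cf_qS cf_q_prevS; have := pquot_gt0 n; nia. Qed.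

Lemma cf_q_gt0 n : (0 < q n)%N.
Proof. by elim: n => [|n IHn] //; rewrite cf_qS; have := pquot_gt0 n; nia. Qed.

Lemma cf_q_leS n : (q n <= q n.+1)%N.
Proof. by rewrite cf_qS; have := pquot_gt0 n; nia. Qed.

Lemma cf_q_mono : {homo cf_q alpha : m n / (m <= n)%N}.
Proof. by apply: homo_leq => //; [exact: leq_trans | exact: cf_q_leS]. Qed.

Lemma cf_q_double n : (2 * q n <= q n.+2)%N.
Proof. by rewrite cf_qS cf_q_prevS; have := pquot_gt0 n.+1; have := cf_q_leS n; nia. Qed.

Lemma cf_q_double_le m n : (m.+2 <= n)%N -> (2 * q m <= q n)%N.
Proof. by move=> /cf_q_mono; apply: leq_trans (cf_q_double m). Qed.

Lemma cf_err_prev_le n (k l : int) :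
  0 < k < (q n)%:Z -> `|cf_err_prev n| <= `|k%:~R * alpha - l%:~R|.
Proof.
(* (u, v) are the integer coordinates of (k, l) in the basis (q_n, p_n), (q_(n-1), p_(n-1))
   of determinant +-1; they have opposite signs, so |v - u x_n| >= 1. *)
move=> k_range; set d := (q n)%:Z * p' n - p n * (q' n)%:Z.
have dd : d * d = 1 by rewrite /d cf_det -expr2 sqrr_sign.
set u := d * (k * p' n - l * (q' n)%:Z); set v := d * (l * (q n)%:Z - k * p n).
have def_k : u * (q n)%:Z + v * (q' n)%:Z = k.
  by rewrite -[RHS]mul1r -dd /u /v /d; ring.
have def_l : u * p n + v * p' n = l.
  by rewrite -[RHS]mul1r -dd /u /v /d; ring.
have -> : k%:~R * alpha - l%:~R = (v%:~R - u%:~R * x n) * cf_err_prev n.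
  rewrite mulrBl -mulrA -mulrN -mulNr -cf_err_gauss /cf_err /cf_err_prev.
  by rewrite -def_k -def_l !intrD !intrM; ring.
rewrite normrM ler_peMl //; have x0 := gauss_it_gt0 n.
have [[v0 u0]|[v0 u0]] := int_comb_signs def_k k_range isT.
  have v1 : 1 <= v%:~R :> R by rewrite ler1z.
  have ux : u%:~R * x n <= 0 by rewrite mulr_le0_ge0 ?lerz0 // ltW.
  by rewrite ger0_norm; lra.
have v1 : v%:~R <= -1 :> R by rewrite -mulrN1z ler_int; lia.
have ux : 0 <= u%:~R * x n by rewrite mulr_ge0 ?ler0z // ltW.
by rewrite ler0_norm; lra.
Qed.

Lemma cf_err_prev_ge n : 1 / (2 * (q n)%:R) <= `|cf_err_prev n|.
Proof.
have x0 := gauss_it_gt0 n; have /andP[_ x1] := gauss_it_itv n.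
have q0 : 0 < (q n)%:R :> R by rewrite ltr0n cf_q_gt0.
have q'q : (q' n)%:R <= (q n)%:R :> R by rewrite ler_nat cf_q_prev_le.
have q'x : (q' n)%:R * x n <= (q n)%:R by rewrite -[leRHS]mulr1 ler_pM // ltW.
have /(congr1 Num.norm) : cf_err_prev n * ((q n)%:R + (q' n)%:R * x n) = - (-1) ^+ n.
  rewrite (_ : _ * _ = (q n)%:R * cf_err_prev n - (q' n)%:R * cf_err n).
    by rewrite -(intr_sign R) -cf_det /cf_err /cf_err_prev intrB !intrM; ring.
  by rewrite cf_err_gauss; ring.
have s0 : 0 <= (q n)%:R + (q' n)%:R * x n by rewrite addr_ge0 ?mulr_ge0 // ltW.
rewrite normrN normr_sign normrM (ger0_norm s0) => he.
by rewrite ler_pdivrMr ?mulr_gt0 // -[X in X <= _]he ler_wpM2l //; lra.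
Qed.

Lemma circ_norm_int_mul_ge n (k : int) :
  k != 0 -> (`|k| < q n)%N -> 1 / (2 * (q n)%:R) <= circ_norm (k%:~R * alpha).
Proof.
move=> k0 kq; rewrite circ_normE; set l := nearest_int _.
apply: le_trans (cf_err_prev_ge n) _.
have [k_gt0|k_le0] := ltrP 0 k; first by apply: cf_err_prev_le; lia.
have -> : k%:~R * alpha - l%:~R = - ((- k)%:~R * alpha - (- l)%:~R) by rewrite !intrN; ring.
by rewrite normrN; apply: cf_err_prev_le; lia.
Qed.

End ContinuedFraction.

Lemma ler_half_nat (R : realType) (Q n : nat) : (Q%:R / 2 <= n%:R :> R) = (Q <= 2 * n)%N.
Proof. by rewrite ler_pdivrMr // -natrM mulnC ler_nat. Qed.

Section Disks.
Variable R : realType.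
Variable alpha : R.
Hypothesis alpha_irr : irrational alpha.
Variable e : R.
Hypothesis e_gt0 : 0 < e.

Local Notation q n := (cf_q alpha n).
Local Notation cn := (@circ_norm R).

Definition cf_level (m n : nat) : bool := (q m <= 2 * n)%N && (n < q m)%N.

Definition disk (n : nat) : set R := cball (n%:R * alpha) (e / n%:R).

Definition disks_meet (n n' : nat) : bool := `[< disk n `&` disk n' !=set0 >].

Lemma size_circ_near_le m (s : seq nat) (y L : R) : 0 <= L -> uniq s ->
  {in s, forall n, (n < q m)%N} -> {in s, forall n, cn (n%:R * alpha - y) <= L} ->
  (size s)%:R <= 4 * L * (q m)%:R + 1.
Proof.
move=> L0 us s_lt s_near.
have q0 : 0 < (q m)%:R :> R by rewrite ltr0n cf_q_gt0.
pose t n := (n%:R * alpha - y) - (nearest_int (n%:R * alpha - y))%:~R.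
have -> : 4 * L * (q m)%:R = 2 * L / (1 / (2 * (q m)%:R)) by rewrite div1r invrK; ring.
apply: (separated_size_le (t := t)) => //; first by rewrite divr_gt0 ?mulr_gt0.
  by move=> n /s_near; rewrite circ_normE.
move=> n1 n2 n1s n2s n12.
have -> : t n1 - t n2 = (n1%:Z - n2%:Z)%:~R * alpha
    - (nearest_int (n1%:R * alpha - y) - nearest_int (n2%:R * alpha - y))%:~R.
  by rewrite /t !intrB !pmulrn; ring.
apply: le_trans (circ_norm_le _ _); apply: (circ_norm_int_mul_ge alpha_irr).
  by rewrite subr_eq0 eqz_nat.
by have := s_lt _ n1s; have := s_lt _ n2s; lia.
Qed.

Lemma disk_radius_le m n : cf_level m n -> e / n%:R <= 2 * e / (q m)%:R.
Proof.
case/andP=> qn _; have q0 : 0 < (q m)%:R :> R by rewrite ltr0n cf_q_gt0.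
have n0 : 0 < n%:R :> R by rewrite ltr0n; have := cf_q_gt0 alpha_irr m; lia.
have {}qn : (q m)%:R <= 2 * n%:R :> R by rewrite -natrM ler_nat.
by rewrite ler_pdivrMr // mulrAC ler_pdivlMr // [2 * e]mulrC -mulrA ler_pM2l.
Qed.

Lemma disks_meet_circ_norm_le n n' : disks_meet n n' ->
  cn (n'%:R * alpha - n%:R * alpha) <= e / n%:R + e / n'%:R.
Proof. by move/asboolP; apply: circ_norm_cballI. Qed.

Lemma cf_level_disks_meet_le m m' n n' : cf_level m n -> cf_level m' n' -> disks_meet n n' ->
  cn ((n'%:Z - n%:Z)%:~R * alpha) <= 2 * e / (q m)%:R + 2 * e / (q m')%:R.
Proof.
move=> ln ln' /disks_meet_circ_norm_le; rewrite intrB !pmulrn mulrBl => /le_trans; apply.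
by apply: lerD; apply: disk_radius_le.
Qed.

Lemma cf_level_disks_disjoint m n n' : e < 1 / 8 -> cf_level m n -> cf_level m n' -> n != n' ->
  disk n `&` disk n' = set0.
Proof.
move=> e_small ln ln' nn'; apply/nonemptyPn => /asboolP /(cf_level_disks_meet_le ln ln').
have k0 : n'%:Z - n%:Z != 0 by rewrite subr_eq0 eqz_nat eq_sym.
have kq : (`|n'%:Z - n%:Z| < q m)%N by move: ln ln'; rewrite /cf_level; lia.
move/(le_trans (circ_norm_int_mul_ge alpha_irr k0 kq)).
rewrite (_ : 1 / _ = 2^-1 * (q m)%:R^-1); last by rewrite div1r invfM.
rewrite (_ : _ + _ = 4 * e * (q m)%:R^-1); last by ring.
by rewrite ler_pM2r ?invr_gt0 ?ltr0n ?cf_q_gt0 //; lra.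
Qed.

Lemma count_disks_meet_le m0 m n (s : seq nat) : (2 * q m0 <= q m)%N -> cf_level m0 n ->
  uniq s -> {in s, forall n', cf_level m n'} ->
  (count (disks_meet n) s)%:R <= 24 * e * (q m)%:R / (q m0)%:R.
Proof.
move=> qq ln us s_level; have q00 : 0 < (q m0)%:R :> R by rewrite ltr0n cf_q_gt0.
have q0 : 0 < (q m)%:R :> R by rewrite ltr0n cf_q_gt0.
set L := 2 * e / (q m0)%:R + 2 * e / (q m)%:R.
have L0 : 0 <= L by rewrite addr_ge0 // divr_ge0 // mulr_ge0 // ltW.
have near :
    {in [seq n' <- s | disks_meet n n'], forall n', cn (n'%:R * alpha - n%:R * alpha) <= L}.
  move=> n'; rewrite mem_filter => /andP[/disks_meet_circ_norm_le near_n n's].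
  apply: le_trans near_n _.
  by apply: lerD; apply: disk_radius_le => //; apply: s_level.
have near_lt : {in [seq n' <- s | disks_meet n n'], forall n', (n' < q m)%N}.
  by move=> n'; rewrite mem_filter => /andP[_ /s_level /andP[]].
have := size_circ_near_le L0 (filter_uniq _ us) near_lt near; rewrite size_filter.
have [/hasP[n' n's nn']|] := boolP (has (disks_meet n) s); last first.
  rewrite has_count -leqNgt leqn0 => /eqP-> _.
  by rewrite divr_ge0 ?mulr_ge0 // ltW.
have qL : 1 / (2 * (q m)%:R) <= L.
  apply: le_trans (cf_level_disks_meet_le ln (s_level _ n's) nn').
  apply: circ_norm_int_mul_ge => //; last by move: ln (s_level _ n's); rewrite /cf_level; lia.
  by rewrite subr_eq0 eqz_nat; apply/eqP; move: ln (s_level _ n's); rewrite /cf_level; lia.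
have q0q : (q m0)%:R <= (q m)%:R :> R by rewrite ler_nat; lia.
have Lq1 : 1 <= 2 * (L * (q m)%:R) by rewrite mulrCA -ler_pdivrMr ?mulr_gt0.
pose r : R := (q m)%:R / (q m0)%:R.
have er : e <= e * r by rewrite ler_pMr // /r ler_pdivlMr // mul1r.
have Lq : L * (q m)%:R = 2 * (e * r) + 2 * e.
  by rewrite /L /r; field; rewrite !gt_eqF.
rewrite -mulrA Lq in Lq1 * => count_le.
by rewrite (_ : _ / _ = 24 * (e * r)); [lra | rewrite /r; ring].
Qed.

End Disks.

Section Pruning.
Variable R : realType.
Variable alpha : R.
Hypothesis alpha_irr : irrational alpha.
Variables (e mu : R) (j : nat).
Hypothesis e_gt0 : 0 < e.
Hypothesis je : j%:R * e <= 1 / 512.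
Variable lev : nat -> nat.
Hypothesis lev_sep : forall i' i, (i' < i)%N -> (2 * cf_q alpha (lev i') <= cf_q alpha (lev i))%N.
Variable Dt : nat -> seq nat.
Hypothesis Dt_uniq : forall i, uniq (Dt i).
Hypothesis Dt_level : forall i, {in Dt i, forall n, cf_level alpha (lev i) n}.
Hypothesis Dt_size_ge : forall i, 1 / 8 * mu * (cf_q alpha (lev i))%:R <= (size (Dt i))%:R.
Hypothesis Dt_size_le : forall i, (size (Dt i))%:R <= mu * (cf_q alpha (lev i))%:R.

Local Notation q i := (cf_q alpha (lev i)).
Local Notation disks_meet := (disks_meet alpha e).

Definition shadowed (i n : nat) : bool :=
  has (fun i' => has (disks_meet^~ n) (Dt i')) (iota 0 i).

Definition pruned (i : nat) : seq nat := [seq n <- Dt i | ~~ shadowed i n].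

Lemma shadowed_count_le_sum i :
  (count (shadowed i) (Dt i)
    <= \sum_(i' <- iota 0 i) \sum_(n <- Dt i') count (disks_meet n) (Dt i))%N.
Proof.
apply: leq_trans (count_has_le_sum _ _ _) _.
by apply: leq_sum => i' _; apply: count_has_le_sum.
Qed.

Lemma shadow_level_sum_le i' i : (i' < i)%N ->
  (\sum_(n <- Dt i') count (disks_meet n) (Dt i))%:R <= 24 * e * (mu * (q i)%:R) :> R.
Proof.
move=> lt_i'i; have q'0 : 0 < (q i')%:R :> R by rewrite ltr0n cf_q_gt0.
rewrite natr_sum.
apply: le_trans (_ : _ <= \sum_(n <- Dt i') 24 * e * (q i)%:R / (q i')%:R) _.
  rewrite big_seq [leRHS]big_seq; apply: ler_sum => n n_in.
  exact: (count_disks_meet_le alpha_irr e_gt0 (lev_sep lt_i'i) (Dt_level n_in) (Dt_uniq i)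
    (@Dt_level i)).
rewrite big_const_seq count_predT iter_addr_0 -[_ *+ size _]mulr_natl.
apply: le_trans (ler_wpM2r _ (Dt_size_le i')) _.
  by rewrite divr_ge0 ?mulr_ge0 // ltW.
by rewrite le_eqVlt; apply/orP; left; apply/eqP; field; rewrite gt_eqF.
Qed.

Lemma shadowed_count_le i :
  (count (shadowed i) (Dt i))%:R <= i%:R * (24 * e * (mu * (q i)%:R)) :> R.
Proof.
have := shadowed_count_le_sum i; rewrite -(ler_nat R) => /le_trans; apply.
rewrite natr_sum big_seq.
apply: le_trans (_ : _ <= \sum_(i' <- iota 0 i | i' \in iota 0 i) 24 * e * (mu * (q i)%:R)) _.
  by apply: ler_sum => i'; rewrite mem_iota add0n => /andP[_ lt_i'i]; apply: shadow_level_sum_le.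
by rewrite -big_seq big_const_seq count_predT size_iota iter_addr_0 [leRHS]mulr_natl.
Qed.

Lemma pruned_uniq i : uniq (pruned i).
Proof. exact: filter_uniq. Qed.

Lemma pruned_subset i : {subset pruned i <= Dt i}.
Proof. by move=> n; rewrite mem_filter => /andP[]. Qed.

Lemma size_pruned_ge i : (i < j)%N -> 1 / 2 * (size (Dt i))%:R <= (size (pruned i))%:R :> R.
Proof.
move=> lt_ij; set X := mu * (q i)%:R.
have ie : i%:R * e <= 1 / 512.
  by apply: le_trans je; apply: ler_wpM2r; [exact: ltW | rewrite ler_nat ltnW].
have X0 : 0 <= X := le_trans (ler0n _ _) (Dt_size_le i).
have shadow_le : i%:R * (24 * e * X) <= 24 / 512 * X.
  rewrite (_ : _ * _ = 24 * (i%:R * e) * X); last by ring.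
  by apply: (ler_wpM2r X0); lra.
have size_split : (size (pruned i))%:R + (count (shadowed i) (Dt i))%:R = (size (Dt i))%:R :> R.
  by rewrite size_filter -natrD addnC count_predC.
have := shadowed_count_le i; have := Dt_size_ge i; rewrite -mulrA -/X; lra.
Qed.

Lemma pruned_disjoint i1 i2 n1 n2 : e < 1 / 8 ->
  n1 \in pruned i1 -> n2 \in pruned i2 -> n1 != n2 ->
  disk alpha e n1 `&` disk alpha e n2 = set0.
Proof.
move=> e_small n1_in n2_in n12.
have not_meets i i' n n' : (i < i')%N -> n \in Dt i -> n' \in pruned i' ->
    disk alpha e n `&` disk alpha e n' = set0.
  move=> lt_ii' n_in; rewrite mem_filter => /andP[/hasPn /(_ i) + _].
  rewrite mem_iota add0n lt_ii' => /(_ isT) /hasPn /(_ n n_in) /asboolPn.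
  by move/nonemptyPn.
have [lt12|lt21|eq12] := ltngtP i1 i2.
- exact: not_meets lt12 (pruned_subset n1_in) n2_in.
- by rewrite setIC; apply: not_meets lt21 (pruned_subset n2_in) n1_in.
- rewrite eq12 in n1_in; apply: (cf_level_disks_disjoint alpha_irr e_gt0 e_small _ _ n12).
  exact: Dt_level (pruned_subset n1_in).
exact: Dt_level (pruned_subset n2_in).
Qed.

End Pruning.

Theorem proposition3p6 (R : realType) (alpha delta1 c delta delta' : R)
  (A : set R) (Dt : nat -> seq nat) (a : R) (j : nat) :
  (@irrational R) alpha ->
  0 < delta1 ->
  0 < c -> c < (1 / 24) ^+ 2 * (1 - expR (- delta1)) ->
  delta1 <= delta' -> delta' <= delta ->
  ((exists (u v : R) (b1 b2 : bool), u < v /\ v <= u + 1 /\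
       A = circ_of_itv (Interval (BSide b1 u) (BSide b2 v)))
   \/
   (exists l ell : nat, (1 <= l)%N /\
       (cf_q alpha l)%:R / 2 <= ell%:R :> R /\ (ell < cf_q alpha l)%N /\
       A = cball (ell%:R * alpha) (expR (- (ell%:R * delta')))
           `\` cball (ell%:R * alpha) (c * expR (- (ell%:R * delta'))))) ->
  (exists M : nat, forall m : nat, (M <= m)%N ->
     uniq (Dt m) /\
     (forall n : nat, n \in Dt m ->
        (cf_q alpha m)%:R / 2 <= n%:R :> R /\ (n < cf_q alpha m)%N /\
        A (n%:R * alpha)) /\
     1 / 8 * circ_meas A * (cf_q alpha m)%:R <= (size (Dt m))%:R /\
     (size (Dt m))%:R <= circ_meas A * (cf_q alpha m)%:R) ->
  0 < a -> a < Order.min (2 ^- 10) (2 ^- 10 * delta) ->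
  (1 <= j)%N ->
  1 / 2 <= j%:R * 2 ^+ 9 * a / delta -> j%:R * 2 ^+ 9 * a / delta <= 1 ->
  exists K : nat, forall k : nat, (K <= k)%N ->
    exists D : nat -> seq nat,
      (forall i : nat, (i < j)%N ->
         uniq (D i) /\ {subset D i <= Dt (k + 2 * i)%N} /\
         1 / 2 * (size (Dt (k + 2 * i)%N))%:R <= (size (D i))%:R :> R /\
         1 / 16 * circ_meas A * (cf_q alpha (k + 2 * i)%N)%:R
           <= 1 / 2 * (size (Dt (k + 2 * i)%N))%:R) /\
      (forall (i1 i2 n1 n2 : nat), (i1 < j)%N -> (i2 < j)%N ->
         n1 \in D i1 -> n2 \in D i2 -> n1 <> n2 ->
         cball (n1%:R * alpha) (a / (delta * n1%:R))
           `&` cball (n2%:R * alpha) (a / (delta * n2%:R)) = set0).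
Proof.
(* The shape of A, the constant c and the lower bound on j only serve to construct the
   sets D~ in the paper; the selection uses nothing but their stated properties. *)
move=> irr delta1_gt0 _ _ d1d' d'd _ [M Dt_spec] a_gt0 a_lt _ _ j_le.
have delta_gt0 : 0 < delta by apply: lt_le_trans delta1_gt0 (le_trans d1d' d'd).
pose e := a / delta.
have e_gt0 : 0 < e by rewrite divr_gt0.
have e_small : e < 1 / 8.
  move: a_lt; rewrite lt_min => /andP[_]; rewrite -ltr_pdivrMr // -/e.
  by rewrite (_ : 2 ^- 10 = 1 / 1024); [lra | field].
have je : j%:R * e <= 1 / 512.
  by move: j_le; rewrite (_ : _ / _ = 512 * (j%:R * e)); [lra | rewrite /e; ring].
have diskE n : cball (n%:R * alpha) (a / (delta * n%:R)) = disk alpha e n.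
  by rewrite /disk invfM mulrA.
exists M; move=> k kM.
have {}Dt_spec i := Dt_spec _ (leq_trans kM (leq_addr (2 * i) k)).
have Dt_uniq i := proj1 (Dt_spec i).
have Dt_size_ge i := proj1 (proj2 (proj2 (Dt_spec i))).
have Dt_size_le i := proj2 (proj2 (proj2 (Dt_spec i))).
have Dt_level i : {in Dt (k + 2 * i)%N, forall n, cf_level alpha (k + 2 * i)%N n}.
  by move=> n /(proj1 (proj2 (Dt_spec i))) [+ [+ _]]; rewrite /cf_level ler_half_nat => -> ->.
have lev_sep i' i : (i' < i)%N -> (2 * cf_q alpha (k + 2 * i') <= cf_q alpha (k + 2 * i))%N.
  by move=> lt_i'i; apply: (cf_q_double_le irr); lia.
exists (pruned alpha e (fun i => Dt (k + 2 * i)%N)); split.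
  move=> i lt_ij; split; first exact: pruned_uniq.
  split; first exact: pruned_subset.
  split; first exact: (size_pruned_ge irr e_gt0 je lev_sep Dt_uniq Dt_level Dt_size_ge Dt_size_le).
  by move: (Dt_size_ge i); rewrite -!mulrA; lra.
move=> i1 i2 n1 n2 _ _ n1_in n2_in /eqP n12; rewrite !diskE.
exact: (pruned_disjoint irr e_gt0 Dt_level e_small n1_in n2_in n12).
Qed.
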